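(* Let $N$ be a positive integer and $A$ an $N$-complementable flat layout. If $B$ is a flat layout that is an $N$-complement of $A$, is coalesced, and is sorted, then $B=\mathrm{comp}^\flat(A,N)$.
   Context: A flat layout $L=(s_1,\dots,s_m):(d_1,\dots,d_m)$ has positive integer shape entries and nonnegative integer stride entries, modes $s_i:d_i$; $\mathrm{size}(L)=\prod s_i$, $\mathrm{cosize}(L)=1+\sum(s_i-1)d_i$; layout function $\Phi_L(x)=\sum x_id_i$, $x_i=\lfloor x/(s_1\cdots s_{i-1})\rfloor\bmod s_i$, on $[0,\mathrm{size}(L))$. $L$ is compact if $\Phi_L:[0,\mathrm{size}(L))\to[0,\mathrm{cosize}(L))$ is bijective. $A\star B$ is concatenation of shapes and of strides; $B$ is an $N$-complement of $A$ if $A\star B$ is compact and $\mathrm{size}(A)\mathrm{size}(B)=N$. $L$ is coalesced if no $s_i=1$ and $s_id_i\ne d_{i+1}$ for $1\le i<m$. Order pairs by $s:d\preceq s':d'$ iff $d<d'$ or ($d=d'$ and $s\le s'$); $L$ is sorted if its modes are $\preceq$-nondecreasing, and $\mathrm{sort}(L)$ stably reorders the modes into this order. $\mathrm{squeeze}(L)$ removes modes with $s_i=1$; $\mathrm{coal}^\flat(L)$ is obtained from $\mathrm{squeeze}(L)$ by repeatedly replacing adjacent modes $s_i,s_{i+1}:d_i,d_{i+1}$ with $d_{i+1}=s_id_i$ by $s_is_{i+1}:d_i$. $A$ is $N$-complementable if, writing $\mathrm{sort}(\mathrm{squeeze}(A))=(s_1,\dots,s_m):(d_1,\dots,d_m)$,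 $s_id_i\mid d_{i+1}$ for $1\le i<m$ and $s_md_m\mid N$; then $\mathrm{comp}^\flat(A,N)=\mathrm{coal}^\flat(C)$ with $C=\bigl(d_1,\tfrac{d_2}{s_1d_1},\tfrac{d_3}{s_2d_2},\dots,\tfrac{N}{s_md_m}\bigr):(1,s_1d_1,s_2d_2,\dots,s_md_m)$. *)

From mathcomp Require Import all_boot.
Set Implicit Arguments. Unset Strict Implicit. Unset Printing Implicit Defensive.

(* A mode s:d is a pair (s, d) : nat * nat (shape, stride); a flat layout is the
   sequence of its modes (s_1:d_1, ..., s_m:d_m). *)
Definition mode := (nat * nat)%type.
Definition layout := seq mode.

Definition shp (L : layout) (i : nat) : nat := (nth (1, 0) L i).1.
Definition strd (L : layout) (i : nat) : nat := (nth (1, 0) L i).2.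

Definition flat_layout (L : layout) : Prop := forall i, i < size L -> 0 < shp L i.

Definition lsize (L : layout) : nat := \prod_(i < size L) shp L i.
Definition cosize (L : layout) : nat :=
  1 + \sum_(i < size L) (shp L i - 1) * strd L i.

Definition Phi (L : layout) (x : nat) : nat :=
  \sum_(i < size L) ((x %/ \prod_(j < i) shp L j) %% shp L i) * strd L i.

Definition compact (L : layout) : Prop :=
  [/\ forall x, x < lsize L -> Phi L x < cosize L,
      forall x y, x < lsize L -> y < lsize L -> Phi L x = Phi L y -> x = y
    & forall z, z < cosize L -> exists2 x, x < lsize L & Phi L x = z].

Definition concat (A B : layout) : layout := A ++ B.

Definition is_complement (N : nat) (A B : layout) : Prop :=
  compact (concat A B) /\ lsize A * lsize B = N.

Definition coalesced (L : layout) : Prop :=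
  (forall i, i < size L -> shp L i != 1) /\
  (forall i, i.+1 < size L -> shp L i * strd L i != strd L i.+1).

Definition mode_le (p q : mode) : bool :=
  (p.2 < q.2) || ((p.2 == q.2) && (p.1 <= q.1)).

Definition sorted_layout (L : layout) : bool := sorted mode_le L.

(* stable sort (mathcomp's path.sort is a stable merge sort) *)
Definition sort_layout (L : layout) : layout := sort mode_le L.

Definition squeeze (L : layout) : layout := filter (fun m => m.1 != 1) L.

(* coal^flat: merges adjacent modes s_i:d_i, s_{i+1}:d_{i+1} with
   d_{i+1} = s_i d_i into s_i s_{i+1} : d_i until no such pair remains;
   computed here right-to-left (the result is a normal form of that rewriting). *)
Fixpoint coal_aux (L : layout) : layout :=
  match L with
  | [::] => [::]
  | m :: L' =>
      match coal_aux L' with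
      | m' :: L'' =>
          if m'.2 == m.1 * m.2 then (m.1 * m'.1, m.2) :: L''
          else m :: m' :: L''
      | [::] => [:: m]
      end
  end.

Definition coal_flat (L : layout) : layout := coal_aux (squeeze L).

Definition complementable (A : layout) (N : nat) : Prop :=
  let S := sort_layout (squeeze A) in
  (forall i, i.+1 < size S -> shp S i * strd S i %| strd S i.+1) /\
  (0 < size S -> shp S (size S).-1 * strd S (size S).-1 %| N).

(* C = (d_1, d_2/(s_1 d_1), ..., N/(s_m d_m)) : (1, s_1 d_1, ..., s_m d_m) *)
Definition comp_C (A : layout) (N : nat) : layout :=
  let S := sort_layout (squeeze A) in
  let strides := 1 :: [seq m.1 * m.2 | m <- S] in
  let nums := [seq m.2 | m <- S] ++ [:: N] in
  [seq (p.1 %/ p.2, p.2) | p <- zip nums strides].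

Definition comp_flat (A : layout) (N : nat) : layout := coal_flat (comp_C A N).

From mathcomp Require Import all_boot zify.
Set Implicit Arguments. Unset Strict Implicit. Unset Printing Implicit Defensive.

(* Read a layout L through the multiset of the values of Phi_L.  Compactness of
   A * B makes it {0, ..., N - 1}, and modes of shape 1 do not change it.  When
   modes of shapes > 1 spread out a multiset {b j : j < n}, one of them has
   stride exactly b: the value b is reached through a mode of stride at most b,
   and every stride is itself a value, hence a multiple of b.  Removing that
   mode leaves {s b j : j < n / s}.  So the nontrivial modes of A * B form, up to
   order, a mixed-radix chain s_1 : 1, s_2 : s_1, s_3 : s_1 s_2, ... of total
   size N.  Sorting orders this chain by stride, so sort (squeeze A) and B are
   complementary subsequences of it, and a coalesced B consists exactly of the
   nontrivial gaps between consecutive modes of sort (squeeze A), which is what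
   comp_flat A N lists. *)

Definition spread (m : mode) (X : seq nat) : seq nat :=
  [seq a * m.2 + v | v <- X, a <- iota 0 m.1].

(* The values of [Phi L] (see [map_Phi_iota]), built mode by mode so that
   permuting the modes permutes the list. *)
Fixpoint img (L : layout) : seq nat :=
  if L is m :: L' then spread m (img L') else [:: 0].

Lemma perm_allpairs_swap (T1 T2 : Type) (R : eqType) (f : T1 -> T2 -> R) s t :
  perm_eq [seq f x y | x <- s, y <- t] [seq f x y | y <- t, x <- s].
Proof.
elim: s => [|x s IH]; first by elim: t.
rewrite perm_sym (perm_allpairs_consr (fun y x => f x y)) /= perm_cat2l perm_sym.
exact: IH.
Qed.

Lemma mem_spread m X x :
  reflect (exists v a, [/\ v \in X, a < m.1 & x = a * m.2 + v]) (x \in spread m X).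
Proof.
apply: (iffP allpairsP) => [[[v a] [/= hv ha ->]]|[v [a [hv ha ->]]]].
  by exists v, a; split => //; move: ha; rewrite mem_iota.
by exists (v, a); split => //=; rewrite mem_iota.
Qed.

Lemma spread_f m X v a : v \in X -> a < m.1 -> a * m.2 + v \in spread m X.
Proof. by move=> hv ha; apply/mem_spread; exists v, a. Qed.

Lemma size_spread m X : size (spread m X) = size X * m.1.
Proof. by rewrite size_allpairs size_iota. Qed.

Lemma spread_cat m X Y : spread m (X ++ Y) = spread m X ++ spread m Y.
Proof. by rewrite /spread map_cat flatten_cat. Qed.

Lemma perm_spread m X Y : perm_eq X Y -> perm_eq (spread m X) (spread m Y).
Proof. by move=> eXY; apply: perm_allpairs. Qed.

Lemma spread_shape1 m X : m.1 = 1 -> spread m X = X.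
Proof. by move=> h; rewrite /spread h; elim: X => //= v X ->; rewrite mul0n. Qed.

Lemma perm_spreadC m1 m2 X :
  perm_eq (spread m1 (spread m2 X)) (spread m2 (spread m1 X)).
Proof.
elim: X => [|v X IH] //=.
rewrite -cat1s !spread_cat; apply: perm_cat => //.
rewrite /spread /= !cats0.
set f := fun a1 a2 => a1 * m1.2 + (a2 * m2.2 + v).
have -> : [seq a * m1.2 + w | w <- [seq a * m2.2 + v | a <- iota 0 m2.1],
                              a <- iota 0 m1.1]
  = [seq f x y | y <- iota 0 m2.1, x <- iota 0 m1.1].
  by elim: (iota 0 m2.1) => //= a l ->.
have -> : [seq a * m2.2 + w | w <- [seq a * m1.2 + v | a <- iota 0 m1.1],
                              a <- iota 0 m2.1]
  = [seq f x y | x <- iota 0 m1.1, y <- iota 0 m2.1].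
  elim: (iota 0 m1.1) => //= a l ->; congr (_ ++ _).
  by apply: eq_map => y; rewrite /f addnCA.
by rewrite perm_sym perm_allpairs_swap.
Qed.

Lemma perm_img_move L1 m L2 : perm_eq (img (L1 ++ m :: L2)) (img (m :: L1 ++ L2)).
Proof.
elim: L1 => [|x L1 IH] //=.
exact: perm_trans (perm_spread x IH) (perm_spreadC _ _ _).
Qed.

Lemma perm_img L1 L2 : perm_eq L1 L2 -> perm_eq (img L1) (img L2).
Proof.
elim: L1 L2 => [|m L1 IH] L2 e12.
  by move: e12; rewrite perm_sym => /perm_nilP ->.
have mL2 : m \in L2 by rewrite -(perm_mem e12) mem_head.
move: e12; case/splitPr: mL2 => P1 P2 e12.
rewrite perm_sym; apply: perm_trans (perm_img_move P1 m P2) _; rewrite perm_sym.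
apply: perm_spread; apply: IH.
rewrite -(perm_cons m); apply: perm_trans e12 _.
by rewrite -cat1s perm_catCA.
Qed.

Lemma img_squeeze L : img (squeeze L) = img L.
Proof.
elim: L => [|m L IH] //=; rewrite /squeeze /=; case: eqP => [hm|_] /=.
  by rewrite spread_shape1 // -IH.
by rewrite -/(squeeze L) IH.
Qed.

Lemma lsize_cons m L : lsize (m :: L) = m.1 * lsize L.
Proof. by rewrite /lsize big_ord_recl. Qed.

Lemma lsize_cat L1 L2 : lsize (L1 ++ L2) = lsize L1 * lsize L2.
Proof.
elim: L1 => [|m L1 IH]; first by rewrite /lsize big_ord0 mul1n.
by rewrite cat_cons !lsize_cons IH mulnA.
Qed.

Lemma Phi_cons m L x : Phi (m :: L) x = (x %% m.1) * m.2 + Phi L (x %/ m.1).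
Proof.
rewrite /Phi big_ord_recl big_ord0 divn1; congr (_ + _).
by apply: eq_bigr => i _; rewrite big_ord_recl divnMA.
Qed.

Lemma iota_mul n s :
  iota 0 (n * s) = flatten [seq [seq y * s + a | a <- iota 0 s] | y <- iota 0 n].
Proof.
elim: n => [|n IH] //.
rewrite mulSnr iotaD IH -addn1 iotaD map_cat flatten_cat /= cats0 add0n.
by congr (_ ++ _); rewrite -[n * s]addn0 iotaDl; apply: eq_map => a /=; lia.
Qed.

Lemma map_Phi_iota L : [seq Phi L x | x <- iota 0 (lsize L)] = img L.
Proof.
elim: L => [|m L IH]; first by rewrite /lsize /Phi /= big_ord0 /= big_ord0.
rewrite lsize_cons mulnC iota_mul map_flatten /= -IH /spread /allpairs_dep.
rewrite -!map_comp; congr flatten; apply/eq_in_map => y _ /=.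
rewrite -map_comp; apply/eq_in_map => a; rewrite mem_iota add0n => /andP[_ ha] /=.
have hs : 0 < m.1 by case: (m.1) ha.
by rewrite Phi_cons modnMDl modn_small // divnMDl // divn_small // addn0.
Qed.

Lemma size_img L : size (img L) = lsize L.
Proof. by rewrite -map_Phi_iota size_map size_iota. Qed.

Lemma compact_img L : compact L -> perm_eq (img L) (iota 0 (lsize L)).
Proof.
case=> Phi_lt Phi_inj Phi_surj.
have e : perm_eq (img L) (iota 0 (cosize L)).
  rewrite -map_Phi_iota; apply: uniq_perm; rewrite ?iota_uniq //.
    by rewrite map_inj_in_uniq ?iota_uniq // => x y; rewrite !mem_iota; apply: Phi_inj.
  move=> z; rewrite mem_iota /=; apply/mapP/idP => [[x]|hz].
    by rewrite mem_iota => /andP[_ hx] ->; apply: Phi_lt.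
  by case: (Phi_surj z hz) => x hx <-; exists x; rewrite // mem_iota.
have -> : lsize L = cosize L by rewrite -size_img (perm_size e) size_iota.
exact: e.
Qed.

Lemma spread_inj m X v1 v2 a1 a2 : uniq (spread m X) -> v1 \in X -> v2 \in X ->
  a1 < m.1 -> a2 < m.1 -> a1 * m.2 + v1 = a2 * m.2 + v2 -> v1 = v2.
Proof.
elim: X => [|v X IH] //=; rewrite -cat1s spread_cat cat_uniq => /and3P[_ hdisj hu].
have new_v b1 b2 w : w \in X -> b1 < m.1 -> b2 < m.1 -> b1 * m.2 + v = b2 * m.2 + w -> False.
  move=> hw hb1 hb2 e; move/hasP: hdisj; apply; exists (b2 * m.2 + w); first exact: spread_f.
  by rewrite -e; apply: spread_f; rewrite ?mem_head.
rewrite !inE => /predU1P[->|h1] /predU1P[->|h2] ha1 ha2 e //.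
- by case: (new_v _ _ _ h2 ha1 ha2 e).
- by case: (new_v _ _ _ h1 ha2 ha1 (esym e)).
- exact: IH e.
Qed.

Lemma spread_uniq m X : 0 < m.1 -> uniq (spread m X) -> uniq X.
Proof.
move=> hm; elim: X => [|v X IH] //=; rewrite -cat1s spread_cat cat_uniq.
case/and3P=> _ hdisj hu; rewrite IH // andbT; apply/negP => hv.
move/hasP: hdisj; apply; exists (0 * m.2 + v); first exact: spread_f.
by apply: spread_f; rewrite ?mem_head.
Qed.

Lemma muln_inj d : 0 < d -> injective (muln d).
Proof. by move=> hd x y /eqP; rewrite eqn_pmul2l // => /eqP. Qed.

Lemma mem_mul_iota b n x : 0 < b ->
  (x \in [seq b * j | j <- iota 0 n]) = (b %| x) && (x %/ b < n).
Proof.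
move=> hb; apply/mapP/andP => [[j]|[/dvdnP[j ->]]].
  by rewrite mem_iota => /andP[_ hj] ->; rewrite dvdn_mulr // mulKn.
by rewrite mulnK // => hj; exists j; rewrite ?mem_iota // mulnC.
Qed.

Lemma digit_unique a b s k q : 0 < b -> a < s ->
  a * b + k * (s * b) = q * (s * b) -> a = 0 /\ k = q.
Proof.
move=> hb has e.
have ab0 : a * b = 0.
  have := congr1 (modn^~ (s * b)) e.
  by rewrite /= addnC modnMDl modnMl modn_small // ltn_pmul2r.
have a0 : a = 0 by move/eqP: ab0; rewrite muln_eq0 (gtn_eqF hb) orbF => /eqP.
split=> //; apply/eqP; rewrite -(eqn_pmul2r (_ : 0 < s * b)) -?e ?ab0 //.
by rewrite muln_gt0 hb (leq_trans _ has).
Qed.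

Section PeelStride.

Variables (b s n : nat) (W : seq nat).
Hypotheses (b_gt0 : 0 < b) (s_gt0 : 0 < s).
Hypothesis spreadW : perm_eq (spread (s, b) W) [seq b * j | j <- iota 0 n].

Let sb_gt0 : 0 < s * b. Proof. by rewrite muln_gt0 s_gt0. Qed.

Let uniq_spreadW : uniq (spread (s, b) W).
Proof. by rewrite (perm_uniq spreadW) map_inj_uniq ?iota_uniq //; exact: muln_inj. Qed.

Let mem_spreadW x : (x \in spread (s, b) W) = (b %| x) && (x %/ b < n).
Proof. by rewrite (perm_mem spreadW) mem_mul_iota. Qed.

Let sub_spreadW : {subset W <= spread (s, b) W}.
Proof. by move=> w hw; rewrite -[w]add0n -[0](mul0n b); apply: spread_f. Qed.

Let sizeW : n = size W * s.
Proof. by rewrite -(size_spread (s, b)) (perm_size spreadW) size_map size_iota. Qed.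

Lemma dvdn_spread_base w : w \in W -> s * b %| w.
Proof.
(* With q := w %/ (s * b), the value q * (s * b) lies in the block
   {v, v + b, ...} of some v <= q * (s * b) in W.  By induction v = q * (s * b),
   and w lies in the same block, so w = v. *)
elim/ltn_ind: w => w IHw hw.
have := sub_spreadW hw; rewrite mem_spreadW => /andP[/dvdnP[j hj] hjn].
rewrite hj mulnK // in hjn.
set q := w %/ (s * b).
have qw : q * (s * b) <= w by apply: leq_divM.
have wq : w < q.+1 * (s * b) by apply: ltn_ceil.
have : q * (s * b) \in spread (s, b) W.
  rewrite mem_spreadW mulnA dvdn_mull // mulnK // (leq_ltn_trans _ hjn) //.
  by rewrite -(leq_pmul2r b_gt0) -mulnA -hj.
case/mem_spread => v [a [hv /= ha e]].
have [vw|wv] := ltnP v w; last first.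
  have -> : w = q * (s * b) by apply/eqP; rewrite eqn_leq qw e (leq_trans wv) ?leq_addl.
  exact: dvdn_mull.
have [k vk] := dvdnP (IHw v vw hv).
have [a0 _] : a = 0 /\ k = q by apply: digit_unique b_gt0 ha _; rewrite -vk -e.
have jqs : j - q * s < s.
  have : j < q.+1 * s by rewrite -(ltn_pmul2r b_gt0) -mulnA -hj.
  rewrite mulSn; lia.
have <- : v = w; last by rewrite vk dvdn_mull.
apply: (spread_inj uniq_spreadW hv hw jqs s_gt0) => /=.
have vq : v = q * s * b by rewrite -mulnA e a0.
by rewrite mul0n add0n mulnBl -hj vq subnK // -mulnA.
Qed.

Lemma perm_spread_base : perm_eq W [seq (s * b) * j | j <- iota 0 (n %/ s)].
Proof.
apply: uniq_perm.
- exact: spread_uniq uniq_spreadW.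
- by rewrite map_inj_uniq ?iota_uniq //; exact: muln_inj.
move=> x; rewrite mem_mul_iota // sizeW mulnK //.
apply/idP/andP => [hx|[/dvdnP[k ->] hk]].
  have [k xk] := dvdnP (dvdn_spread_base hx); split; first by rewrite xk dvdn_mull.
  move: (sub_spreadW hx); rewrite mem_spreadW xk mulnK // mulnA mulnK //.
  by rewrite sizeW ltn_mul2r s_gt0 => /andP[_].
rewrite mulnK // in hk.
have : k * (s * b) \in spread (s, b) W.
  by rewrite mem_spreadW mulnA dvdn_mull // mulnK // sizeW ltn_mul2r s_gt0.
case/mem_spread => v [a [hv /= ha e]].
have [k' vk'] := dvdnP (dvdn_spread_base hv).
have [_ <-] : a = 0 /\ k' = k by apply: digit_unique b_gt0 ha _; rewrite -vk' -e.
by rewrite -vk'.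
Qed.

End PeelStride.

(* [is_chain b K E]: K = [:: (s_1, b); (s_2, s_1 b); ...; (s_k, s_1...s_(k-1) b)]
   with all s_i > 1 and s_1...s_k b = E. *)
Fixpoint is_chain (b : nat) (K : layout) (E : nat) : bool :=
  if K is m :: K' then [&& m.2 == b, 1 < m.1 & is_chain (m.1 * m.2) K' E]
  else b == E.

Lemma mem0_img L : all (fun m : mode => 0 < m.1) L -> 0 \in img L.
Proof.
elim: L => [|m L IH] /=; first by rewrite inE.
by case/andP=> hm /IH/spread_f/(_ hm); rewrite mul0n.
Qed.

Lemma mem_img_stride L m : all (fun m : mode => 0 < m.1) L -> m \in L -> 1 < m.1 ->
  m.2 \in img L.
Proof.
elim: L => [|m' L IH] //= /andP[hm' shL]; rewrite inE => /predU1P[->|mL] hm.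
  by rewrite -[m'.2]addn0 -[m'.2]mul1n; apply: spread_f => //; apply: mem0_img.
by rewrite -[m.2]add0n -(mul0n m'.2); apply: spread_f => //; apply: IH.
Qed.

Lemma img_stride_le L v : v \in img L -> 0 < v -> exists2 m : mode, m \in L & 0 < m.2 <= v.
Proof.
elim: L v => [|m L IH] v /=; first by rewrite inE => /eqP ->.
case/mem_spread => w [a [hw ha ->]] v_gt0.
have [am0|am_gt0] := posnP (a * m.2).
  rewrite am0 add0n in v_gt0; have [m' m'L hm'] := IH w hw v_gt0.
  by exists m'; rewrite ?inE ?m'L ?orbT // am0 add0n.
exists m; rewrite ?mem_head //.
move: am_gt0; rewrite muln_gt0 => /andP[a_gt0 ->] /=.
by rewrite (leq_trans _ (leq_addr _ _)) // leq_pmull.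
Qed.

Lemma lsize_gt0 L : all (fun m : mode => 0 < m.1) L -> 0 < lsize L.
Proof.
elim: L => [|m L IH]; first by rewrite /lsize big_ord0.
by rewrite lsize_cons muln_gt0 => /= /andP[-> /IH].
Qed.

Lemma stride_mem_img L b n : 0 < b -> all (fun m : mode => 1 < m.1) L -> L != [::] ->
  perm_eq (img L) [seq b * j | j <- iota 0 n] -> exists s, (s, b) \in L.
Proof.
move=> b_gt0 shL; case: L shL => // m L shL _ imgL.
have pos : all (fun m : mode => 0 < m.1) (m :: L) by apply: sub_all shL => ? /ltnW.
have n_gt1 : 1 < n.
  rewrite -(size_iota 0 n) -(size_map (muln b)) -(perm_size imgL) size_img lsize_cons.
  case/andP: shL => m_gt1 _; case/andP: pos => _ /lsize_gt0 L_gt0.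
  by rewrite (leq_trans m_gt1) // leq_pmulr.
have : b \in img (m :: L) by rewrite (perm_mem imgL) mem_mul_iota // dvdnn divnn b_gt0.
case/img_stride_le => // -[s d] sdL /andP[d_gt0 db].
exists s; suff <- : d = b by [].
have := mem_img_stride pos sdL (allP shL _ sdL).
rewrite (perm_mem imgL) mem_mul_iota // => /andP[/dvdn_leq bd _].
by apply/eqP; rewrite eqn_leq db bd.
Qed.

Lemma perm_chain_img L b n : 0 < b -> all (fun m : mode => 1 < m.1) L ->
  perm_eq (img L) [seq b * j | j <- iota 0 n] ->
  exists2 K, perm_eq L K & is_chain b K (b * n).
Proof.
have [k] := ubnP (size L); elim: k L b n => // k IH L b n szL b_gt0 shL imgL.
have [L0|L0] := eqVneq L [::].
  exists [::]; rewrite ?L0 //=.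
  by move: (perm_size imgL); rewrite L0 size_map size_iota => <-; rewrite muln1.
have [s sbL] := stride_mem_img b_gt0 shL L0 imgL.
set L' := rem (s, b) L.
have eL : perm_eq L ((s, b) :: L') by apply: perm_to_rem.
have s_gt1 : 1 < s by apply: (allP shL _ sbL).
have imgL' : perm_eq (spread (s, b) (img L')) [seq b * j | j <- iota 0 n].
  by rewrite -[spread _ _]/(img ((s, b) :: L')) -(permPl (perm_img eL)).
have s_dvd_n : s %| n.
  by rewrite -(size_iota 0 n) -(size_map (muln b)) -(perm_size imgL') size_spread dvdn_mull.
have [|||K eK chainK] := IH L' (s * b) (n %/ s) _ _ _ (perm_spread_base b_gt0 (ltnW s_gt1) imgL').
- by rewrite size_rem // -ltnS (leq_trans _ szL) // prednK // lt0n size_eq0.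
- by rewrite muln_gt0 b_gt0 (ltnW s_gt1).
- by apply/allP => m /mem_rem; apply: (allP shL).
exists ((s, b) :: K); first by rewrite (perm_trans eL) // perm_cons.
by rewrite /= eqxx s_gt1 -[n in b * n](divnK s_dvd_n) mulnA mulnAC [b * s]mulnC.
Qed.

Definition nonmergeable : rel mode := fun p q => q.2 != p.1 * p.2.

Lemma coal_aux_id L : sorted nonmergeable L -> coal_aux L = L.
Proof.
elim: L => [|m L IH] //= hL; rewrite IH ?(path_sorted hL) //.
by case: L hL {IH} => [|m' L] //= /andP[/negbTE ->].
Qed.

Lemma chain_path b K E x : 0 < b -> is_chain b K E -> x.2 < b -> path (relpre snd ltn) x K.
Proof.
elim: K x b => [|[s d] K IH] x b //= b_gt0 /and3P[/eqP -> s_gt1 chainK] xb.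
rewrite xb; apply: (IH _ (s * b)) => //; first by rewrite muln_gt0 b_gt0 ltnW.
by rewrite ltn_Pmull.
Qed.

Lemma sorted_mode_le_stride L :
  sorted mode_le L -> uniq [seq m.2 | m <- L] -> sorted (relpre snd ltn) L.
Proof.
case: L => [|x L] //=; elim: L x => [|y L IH] x //= /andP[xy hL].
rewrite inE negb_or => /andP[/andP[xy2 _] hu]; rewrite IH // andbT.
by move: xy xy2; rewrite /mode_le /=; case: ltngtP.
Qed.

(* [gaps b S E] is [squeeze] of the list [C] of [comp_C], with [b] in the role of
   the first stride [1]: the modes [d_(i+1) / (s_i d_i) : s_i d_i] between
   consecutive modes of [S], with the trivial ones dropped. *)
Fixpoint gaps (b : nat) (S : layout) (E : nat) : layout :=
  match S with
  | [::] => if E %/ b == 1 then [::] else [:: (E %/ b, b)]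
  | m :: S' =>
      (if m.2 %/ b == 1 then [::] else [:: (m.2 %/ b, b)]) ++ gaps (m.1 * m.2) S' E
  end.

Lemma comp_flat_gaps A N : comp_flat A N = coal_aux (gaps 1 (sort_layout (squeeze A)) N).
Proof.
rewrite /comp_flat /coal_flat /comp_C; congr coal_aux.
elim: (sort_layout _) 1 => [|m S IH] b /=; first by case: eqP.
by rewrite /squeeze /= -/(squeeze _) IH; case: eqP.
Qed.

Lemma filter_chain_gaps K b E (P : pred mode) : 0 < b -> is_chain b K E ->
  sorted nonmergeable [seq m <- K | ~~ P m] ->
  [seq m <- K | ~~ P m] = gaps b [seq m <- K | P m] E.
Proof.
elim: K b => [|[t d] K IH] b b_gt0 /=; first by move=> /eqP <- _; rewrite divnn b_gt0.
case/and3P => /eqP -> t_gt1 chainK.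
have tb_gt0 : 0 < t * b by rewrite muln_gt0 b_gt0 ltnW.
have tb1 : (t * b %/ b == 1) = false by rewrite mulnK // gtn_eqF.
case: (P (t, b)) => /= hK; first by rewrite divnn b_gt0 /=; apply: IH.
rewrite (IH _ tb_gt0 chainK (path_sorted hK)).
case: K IH chainK hK => [|[t2 d2] K] IH /=.
  by move=> /eqP <- _; rewrite divnn tb_gt0 tb1 mulnK.
case/and3P => /eqP -> _ _; case: (P (t2, t * b)) => /=.
  by rewrite divnn tb_gt0 tb1 mulnK.
by rewrite /nonmergeable /= eqxx.
Qed.

Lemma chain_split_gaps b K E S B : 0 < b -> is_chain b K E -> perm_eq (S ++ B) K ->
  sorted mode_le S -> sorted mode_le B -> sorted nonmergeable B -> B = gaps b S E.
Proof.
move=> b_gt0 chainK eK sortS sortB nmB.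
have sortK : sorted (relpre snd ltn) K.
  exact: path_sorted (chain_path (x := (0, 0)) b_gt0 chainK b_gt0).
have uSB : uniq [seq m.2 | m <- S ++ B].
  by rewrite (perm_uniq (perm_map _ eK)) (sorted_uniq ltn_trans ltnn) ?sorted_map.
have := uSB; rewrite map_cat cat_uniq => /and3P[uS _ uB].
have /and3P[_ disjSB _] : [&& uniq S, ~~ has (mem S) B & uniq B].
  by rewrite -cat_uniq (map_uniq uSB).
have memK x : (x \in K) = (x \in S) || (x \in B) by rewrite -(perm_mem eK) mem_cat.
have ltn_trans' : transitive (relpre (@snd nat nat) ltn) := relpre_trans ltn_trans.
have ltn_irr : irreflexive (relpre (@snd nat nat) ltn) := fun m => ltnn m.2.
have eS : S = [seq m <- K | m \in S].
  apply: (irr_sorted_eq ltn_trans' ltn_irr) => [||x].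
  - exact: sorted_mode_le_stride.
  - exact: sorted_filter.
  by rewrite mem_filter memK; case: (x \in S).
have eB : B = [seq m <- K | m \notin S].
  apply: (irr_sorted_eq ltn_trans' ltn_irr) => [||x].
  - exact: sorted_mode_le_stride.
  - exact: sorted_filter.
  rewrite mem_filter memK; case: (boolP (x \in S)) => //= xS.
  by apply/negP => xB; case/hasP: disjSB; exists x.
by rewrite eB {2}eS; apply: filter_chain_gaps; rewrite -?eB.
Qed.

Lemma mode_le_total : total mode_le.
Proof. by move=> p q; rewrite /mode_le; case: ltngtP => //= _; apply: leq_total. Qed.

Lemma flat_layout_all L : flat_layout L -> all (fun m : mode => 0 < m.1) L.
Proof. by move=> hL; apply/(all_nthP (1, 0)). Qed.

Lemma squeeze_shape_gt1 L :
  all (fun m : mode => 0 < m.1) L -> all (fun m : mode => 1 < m.1) (squeeze L).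
Proof. by rewrite all_filter => posL; apply: sub_all posL => m /= ?; apply/implyP; lia. Qed.

Theorem mainTheorem15 (N : nat) (A B : layout) :
  0 < N -> flat_layout A -> complementable A N ->
  flat_layout B -> is_complement N A B -> coalesced B -> sorted_layout B ->
  B = comp_flat A N.
Proof.
move=> _ /flat_layout_all posA _ /flat_layout_all posB [compactAB sizeAB] [shB nmB] sortB.
have sqB : squeeze B = B by apply/all_filterP/(all_nthP (1, 0)).
have [K eK chainK] : exists2 K, perm_eq (squeeze A ++ B) K & is_chain 1 K (1 * N).
  rewrite -{1}sqB -filter_cat; apply: perm_chain_img => //.
    by apply: squeeze_shape_gt1; rewrite all_cat posA.
  by rewrite img_squeeze (eq_map mul1n) map_id -sizeAB -lsize_cat compact_img.
have nmB' : sorted nonmergeable B by apply/(sortedP (1, 0)) => i /nmB; rewrite eq_sym.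
have eB : B = gaps 1 (sort_layout (squeeze A)) (1 * N).
  apply: chain_split_gaps chainK _ _ sortB nmB' => //.
    by rewrite (perm_trans _ eK) // perm_cat2r perm_sort.
  exact: (sort_sorted mode_le_total).
by rewrite comp_flat_gaps -(mul1n N) -eB coal_aux_id.
Qed.
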